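(* Let $x_1<x_2<\cdots<x_n$ be a partition of $[x_1,x_n]$, with $h_i=x_{i+1}-x_i$ ($1\le i\le n-1$) and $\hat h=\max_i h_i$. Let $f\in C^4([x_1,x_n])$ and $L>0$ with $|f^{(4)}(x)|\le L$ for all $x\in[x_1,x_n]$, and assume there is $K>0$ with $\hat h/h_i\le K$ for all $i=1,\dots,n-1$. Write $f_i=f(x_i)$, $f'_i=f'(x_i)$, $m_i=(f_{i+1}-f_i)/h_i$, $\lambda_i=\frac{h_{i+1}}{h_i+h_{i+1}}$, $\mu_i=\frac{h_i}{h_i+h_{i+1}}$. Let $\dot f_1=f'_1$, $\dot f_n=f'_n$ and let $\dot f_2,\dots,\dot f_{n-1}$ be the solution of $$\lambda_{i-1}\dot f_{i-1}+2\dot f_i+\mu_{i-1}\dot f_{i+1}=3(\lambda_{i-1}m_{i-1}+\mu_{i-1}m_i),\qquad i=2,\dots,n-1.$$ Fix an index $i_0$ with $1<i_0<n$, constants $p_{i_0},T>0$, and a number $\tilde f_{i_0}$ with $|f'_{i_0}-\tilde f_{i_0}|=T\hat h^{p_{i_0}}$. Define the modified values $\dot F_{i_0}$ by $(\dot F_{i_0})_{i_0}=\tilde f_{i_0}$ and $(\dot F_{i_0})_i=\dot f_i$ for $i\ne i_0$. Then $$|(\dot F_{i_0})_i-f'_i|=\begin{cases}O(\hat h^{p_{i_0}}),& i=i_0,\\ O(\hat h^3),& i\ne i_0.\end{cases}$$ Moreover, the piecewise cubic Hermite interpolant $P$ built with the derivative values $\dot F_{i_0}$ (on each $[x_i,x_{i+1}]$,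 $P$ is the cubic with $P(x_i)=f_i$, $P(x_{i+1})=f_{i+1}$, $P'(x_i)=(\dot F_{i_0})_i$, $P'(x_{i+1})=(\dot F_{i_0})_{i+1}$) has $C^2$ regularity on $[x_1,x_n]$ except at the points $x_{i_0-1},x_{i_0},x_{i_0+1}$.
   Context: $O(\hat h^q)$ denotes a quantity bounded in absolute value by $C\hat h^q$ with $C$ independent of the partition (it may depend on $f$, $L$, $K$, $T$). *)

From Stdlib Require Import Reals Lra Lia.
From Coquelicot Require Import Coquelicot.
Open Scope R_scope.

(* Nodes are indexed 1..n as in the paper: x : nat -> R, x 1 < ... < x n. *)

Definition hstep (x : nat -> R) (i : nat) : R := x (S i) - x i.

Fixpoint hmax (x : nat -> R) (k : nat) : R :=
  match k with
  | O => 0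
  | S k' => Rmax (hmax x k') (hstep x (S k'))
  end.

Definition hhat (x : nat -> R) (n : nat) : R := hmax x (n - 1).

Definition slope (f : R -> R) (x : nat -> R) (i : nat) : R :=
  (f (x (S i)) - f (x i)) / hstep x i.

Definition lam (x : nat -> R) (i : nat) : R :=
  hstep x (S i) / (hstep x i + hstep x (S i)).
Definition mu (x : nat -> R) (i : nat) : R :=
  hstep x i / (hstep x i + hstep x (S i)).

Definition spline_derivs (f : R -> R) (x : nat -> R) (n : nat) (dd : nat -> R) : Prop :=
  dd 1%nat = Derive f (x 1%nat) /\ dd n = Derive f (x n) /\
  forall i : nat, (2 <= i <= n - 1)%nat ->
    lam x (i - 1) * dd (i - 1)%nat + 2 * dd i + mu x (i - 1) * dd (S i)
    = 3 * (lam x (i - 1) * slope f x (i - 1) + mu x (i - 1) * slope f x i).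

Definition cubic (c0 c1 c2 c3 xi : R) (X : R) : R :=
  c0 + c1 * (X - xi) + c2 * (X - xi) ^ 2 + c3 * (X - xi) ^ 3.

Definition pw_hermite (x : nat -> R) (n : nat) (y d : nat -> R) (P : R -> R) : Prop :=
  forall i : nat, (1 <= i <= n - 1)%nat ->
    exists c0 c1 c2 c3 : R,
      let q := cubic c0 c1 c2 c3 (x i) in
      (forall X, x i <= X <= x (S i) -> P X = q X) /\
      q (x i) = y i /\ q (x (S i)) = y (S i) /\
      Derive q (x i) = d i /\ Derive q (x (S i)) = d (S i).

Definition C2_at (P : R -> R) (x0 : R) : Prop :=
  exists delta : R, 0 < delta /\
    (forall y, Rabs (y - x0) < delta -> forall k, (k <= 2)%nat -> ex_derive_n P k y) /\
    continuous (Derive_n P 2) x0.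

Definition C4_on (f : R -> R) (a b : R) : Prop :=
  exists delta : R, 0 < delta /\
    forall y, a - delta < y < b + delta ->
      (forall k, (k <= 4)%nat -> ex_derive_n f k y) /\
      continuous (Derive_n f 4) y.

From Stdlib Require Import Reals Lra Lia Factorial.
From Coquelicot Require Import Coquelicot.
Open Scope R_scope.

(* By Taylor expansion the exact slopes f'_i satisfy the spline equations up to a
   residual of size L h^3, and since the tridiagonal system is diagonally dominant
   (lambda + mu = 1 < 2) a discrete maximum principle turns this into |dd_i - f'_i| <= L h^3.
   For the regularity: the Hermite interpolant is a cubic inside each interval, and at an
   inner node x_j the spline equation holds iff the second derivatives of the two adjacent
   cubics agree there. That equation only involves the slopes at x_{j-1}, x_j, x_{j+1}, so
   it survives the modification unless j is i0 - 1, i0 or i0 + 1. Two cubics with C^2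
   contact at x_j differ by a multiple of (X - x_j)^3, so the interpolant is a cubic plus
   a multiple of |X - x_j|^3 near x_j, which is C^2. *)

Lemma pow_opp_diff_sign (y c : R) (m : nat) : (- y - - c) ^ m * (-1) ^ m = (y - c) ^ m.
Proof.
  replace (- y - - c) with (-1 * (y - c)) by ring.
  rewrite Rpow_mult_distr, Rmult_comm, <- Rmult_assoc, <- Rpow_mult_distr.
  replace (-1 * -1) with 1 by ring. rewrite pow1. ring.
Qed.

Lemma Taylor_Lagrange_rev (f : R -> R) (N : nat) (al be c y : R) :
  al < y -> y < c -> c < be ->
  (forall t, al < t < be -> forall k, (k <= S N)%nat -> ex_derive_n f k t) ->
  exists z, y < z < c /\
    f y = sum_f_R0 (fun m => (y - c) ^ m / INR (fact m) * Derive_n f m c) N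
          + (y - c) ^ S N / INR (fact (S N)) * Derive_n f (S N) z.
Proof.
  intros Hal Hyc Hbe Hf.
  set (g := fun s => f (- s)).
  assert (Dg : forall k, (k <= S N)%nat -> forall t, - be < t < - al ->
             is_derive_n g k t ((-1) ^ k * Derive_n f k (- t))).
  { intros k Hk t Ht. apply is_derive_n_comp_opp.
    - apply locally_interval with (a := Finite al) (b := Finite be); simpl; try lra.
      intros s H1 H2 k' Hk'. apply Hf; [lra | lia].
    - apply Derive_n_correct, Hf; [lra | lia]. }
  assert (Eg : forall k, (k <= S N)%nat -> forall t, - be < t < - al ->
             Derive_n g k t = (-1) ^ k * Derive_n f k (- t)).
  { intros k Hk t Ht. apply is_derive_n_unique, Dg; auto. }
  destruct (Taylor_Lagrange g N (- c) (- y)) as [z [Hz Eq]]; [lra |..].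
  { intros t Ht [| k] Hk; [exact I |].
    exists ((-1) ^ S k * Derive_n f (S k) (- t)). apply (Dg (S k) Hk t). lra. }
  exists (- z). split; [lra |].
  unfold g at 1 in Eq. rewrite Ropp_involutive in Eq. rewrite Eq.
  f_equal.
  - apply sum_eq. intros m Hm. rewrite Eg, Ropp_involutive by (lia || lra).
    rewrite <- (pow_opp_diff_sign y c m). field. apply INR_fact_neq_0.
  - rewrite Eg by (lia || lra). rewrite <- (pow_opp_diff_sign y c (S N)).
    field. apply INR_fact_neq_0.
Qed.

Lemma Taylor_remainder_bound (f : R -> R) (N : nat) (al be a b M c y : R) :
  al < a -> b < be ->
  (forall t, al < t < be -> forall k, (k <= S N)%nat -> ex_derive_n f k t) ->
  (forall t, a <= t <= b -> Rabs (Derive_n f (S N) t) <= M) ->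
  a <= c <= b -> a <= y <= b ->
  Rabs (f y - sum_f_R0 (fun m => (y - c) ^ m / INR (fact m) * Derive_n f m c) N)
  <= M * Rabs (y - c) ^ S N / INR (fact (S N)).
Proof.
  intros Hal Hbe Hf HM Hc Hy.
  assert (Hrem : forall z, a <= z <= b ->
            Rabs ((y - c) ^ S N / INR (fact (S N)) * Derive_n f (S N) z)
            <= M * Rabs (y - c) ^ S N / INR (fact (S N))).
  { intros z Hz. pose proof (INR_fact_lt_0 (S N)) as Hfact.
    rewrite Rabs_mult, Rabs_div, <- RPow_abs, (Rabs_pos_eq (INR _)) by lra.
    replace (M * Rabs (y - c) ^ S N / INR (fact (S N)))
      with (Rabs (y - c) ^ S N / INR (fact (S N)) * M) by (field; lra).
    apply Rmult_le_compat_l; [| auto].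
    apply Rdiv_le_0_compat; [apply pow_le, Rabs_pos | exact Hfact]. }
  destruct (Rtotal_order c y) as [Hlt | [<- | Hgt]].
  - destruct (Taylor_Lagrange f N c y Hlt) as [z [Hz ->]].
    { intros t Ht k Hk. apply Hf; [lra | lia]. }
    replace (_ + _ - _) with ((y - c) ^ S N / INR (fact (S N)) * Derive_n f (S N) z) by ring.
    apply Hrem. lra.
  - replace (c - c) with 0 by ring.
    assert (Hsum : forall K, sum_f_R0 (fun m => 0 ^ m / INR (fact m) * Derive_n f m c) K = f c).
    { induction K as [| K IH]; simpl; [field |].
      rewrite IH. unfold Rdiv. rewrite !Rmult_0_l. apply Rplus_0_r. }
    rewrite Hsum, Rminus_diag, Rabs_R0, pow_i by lia.
    unfold Rdiv. rewrite Rmult_0_r, Rmult_0_l. lra.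
  - destruct (Taylor_Lagrange_rev f N al be c y) as [z [Hz ->]]; try lra; auto.
    replace (_ + _ - _) with ((y - c) ^ S N / INR (fact (S N)) * Derive_n f (S N) z) by ring.
    apply Hrem. lra.
Qed.

Section C4Taylor.

Variables (f : R -> R) (a b L : R).
Hypothesis f_C4 : C4_on f a b.
Hypothesis f4_bound : forall t, a <= t <= b -> Rabs (Derive_n f 4 t) <= L.

Lemma C4_Taylor3_bound (c y : R) :
  a <= c <= b -> a <= y <= b ->
  Rabs (f y - (f c + (y - c) * Derive f c + (y - c) ^ 2 / 2 * Derive_n f 2 c
               + (y - c) ^ 3 / 6 * Derive_n f 3 c)) <= L * Rabs (y - c) ^ 4 / 24.
Proof.
  intros Hc Hy. destruct f_C4 as [del [Hdel Hf]].
  pose proof (Taylor_remainder_bound f 3 (a - del) (b + del) a b L c y) as HT.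
  replace (INR (fact 4)) with 24 in HT by (simpl; ring).
  replace (sum_f_R0 _ 3)
    with (f c + (y - c) * Derive f c + (y - c) ^ 2 / 2 * Derive_n f 2 c
          + (y - c) ^ 3 / 6 * Derive_n f 3 c) in HT
    by (simpl; change (Derive (fun x => f x) c) with (Derive f c); field).
  apply HT; auto; try lra.
  intros t Ht k Hk. apply (Hf t Ht); lia.
Qed.

Lemma C4_derive_Taylor2_bound (c y : R) :
  a <= c <= b -> a <= y <= b ->
  Rabs (Derive f y - (Derive f c + (y - c) * Derive_n f 2 c + (y - c) ^ 2 / 2 * Derive_n f 3 c))
  <= L * Rabs (y - c) ^ 3 / 6.
Proof.
  intros Hc Hy. destruct f_C4 as [del [Hdel Hf]].
  assert (Hshift : forall m s, Derive_n (Derive f) m s = Derive_n f (S m) s).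
  { intros m s. rewrite <- Nat.add_1_r, <- Derive_n_comp. reflexivity. }
  pose proof (Taylor_remainder_bound (Derive f) 2 (a - del) (b + del) a b L c y) as HT.
  replace (INR (fact 3)) with 6 in HT by (simpl; ring).
  rewrite (sum_eq _ (fun m => (y - c) ^ m / INR (fact m) * Derive_n f (S m) c)) in HT
    by (intros; now rewrite Hshift).
  replace (sum_f_R0 _ 2)
    with (Derive f c + (y - c) * Derive_n f 2 c + (y - c) ^ 2 / 2 * Derive_n f 3 c) in HT
    by (simpl; change (Derive (fun x => f x) c) with (Derive f c); field).
  apply HT; auto; try lra.
  intros t Ht [| k] Hk; [exact I |].
  apply ex_derive_ext with (f := Derive_n f (S k)); [intros s; now rewrite Hshift |].
  apply (proj1 (Hf t Ht) (S (S k))). lia.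
Qed.

Lemma C4_hermite_defect_bound (c y : R) :
  a <= c <= b -> a <= y <= b -> y <> c ->
  Rabs (3 * ((f y - f c) / (y - c)) - 2 * Derive f c - Derive f y
        - (y - c) / 2 * Derive_n f 2 c) <= 7 / 24 * L * Rabs (y - c) ^ 3.
Proof.
  intros Hc Hy Hyc.
  pose proof (C4_Taylor3_bound c y Hc Hy) as H4.
  pose proof (C4_derive_Taylor2_bound c y Hc Hy) as H3.
  set (s := y - c) in *.
  assert (Hs : 0 < Rabs s) by (apply Rabs_pos_lt; unfold s; lra).
  set (E4 := f y - _) in H4. set (E3 := Derive f y - _) in H3.
  replace (3 * ((f y - f c) / s) - 2 * Derive f c - Derive f y - s / 2 * Derive_n f 2 c)
    with (3 * (E4 / s) - E3) by (unfold E4, E3; field; unfold s; lra).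
  eapply Rle_trans; [apply Rabs_triang |].
  rewrite Rabs_Ropp, Rabs_mult, Rabs_div, (Rabs_pos_eq 3) by (unfold s; lra).
  assert (HE4 : Rabs E4 / Rabs s <= L * Rabs s ^ 3 / 24).
  { apply Rle_div_l; [exact Hs |].
    replace (L * Rabs s ^ 3 / 24 * Rabs s) with (L * Rabs s ^ 4 / 24) by field. exact H4. }
  lra.
Qed.

Lemma spline_residual_bound (x : nat -> R) (k : nat) (H : R) :
  a <= x k -> x (S (S k)) <= b -> x k < x (S k) -> x (S k) < x (S (S k)) ->
  hstep x k <= H -> hstep x (S k) <= H ->
  Rabs (3 * (lam x k * slope f x k + mu x k * slope f x (S k))
        - (lam x k * Derive f (x k) + 2 * Derive f (x (S k)) + mu x k * Derive f (x (S (S k)))))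
  <= L * H ^ 3.
Proof.
  intros Ha Hb Hab Hbc HhH HgH.
  assert (HL : 0 <= L) by (eapply Rle_trans; [apply Rabs_pos | apply (f4_bound (x k)); lra]).
  unfold lam, mu, slope in *. unfold hstep in *.
  set (xa := x k) in *. set (xb := x (S k)) in *. set (xc := x (S (S k))) in *.
  pose proof (C4_hermite_defect_bound xb xa ltac:(lra) ltac:(lra) ltac:(intro; lra)) as Hl.
  pose proof (C4_hermite_defect_bound xb xc ltac:(lra) ltac:(lra) ltac:(intro; lra)) as Hr.
  rewrite (Rabs_left (xa - xb)) in Hl by lra. rewrite (Rabs_pos_eq (xc - xb)) in Hr by lra.
  set (Dl := 3 * _ - _ - _ - _) in Hl. set (Dr := 3 * _ - _ - _ - _) in Hr.
  set (h := xb - xa) in *. set (g := xc - xb) in *.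
  assert (Hh : 0 < h) by (unfold h; lra). assert (Hg : 0 < g) by (unfold g; lra).
  (* the second-derivative terms of the two defects cancel in the weighted sum *)
  replace (3 * _ - _) with (g / (h + g) * Dl + h / (h + g) * Dr)
    by (unfold Dl, Dr, h, g; field; lra).
  assert (Hh3 : h ^ 3 <= H ^ 3) by (apply pow_incr; lra).
  assert (Hg3 : g ^ 3 <= H ^ 3) by (apply pow_incr; lra).
  replace (- (xa - xb)) with h in Hl by (unfold h; ring).
  assert (Hwl : 0 < g / (h + g)) by (apply Rdiv_lt_0_compat; lra).
  assert (Hwr : 0 < h / (h + g)) by (apply Rdiv_lt_0_compat; lra).
  assert (Hw : g / (h + g) + h / (h + g) = 1) by (field; lra).
  eapply Rle_trans; [apply Rabs_triang |].
  rewrite !Rabs_mult, (Rabs_pos_eq (g / _)), (Rabs_pos_eq (h / _)) by lra.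
  apply Rle_trans
    with (g / (h + g) * (7 / 24 * L * H ^ 3) + h / (h + g) * (7 / 24 * L * H ^ 3)).
  - apply Rplus_le_compat; apply Rmult_le_compat_l; try lra.
    + eapply Rle_trans; [exact Hl |]. apply Rmult_le_compat_l; lra.
    + eapply Rle_trans; [exact Hr |]. apply Rmult_le_compat_l; lra.
  - assert (0 <= L * H ^ 3) by (apply Rmult_le_pos; [lra | apply pow_le; lra]). nra.
Qed.

End C4Taylor.

Lemma exists_max_abs_index (e : nat -> R) (n : nat) :
  (1 <= n)%nat ->
  exists k, (1 <= k <= n)%nat /\ forall i, (1 <= i <= n)%nat -> Rabs (e i) <= Rabs (e k).
Proof.
  induction n as [| [| n] IH]; intros Hn; [lia | |].
  - exists 1%nat. split; [lia |]. intros i Hi. replace i with 1%nat by lia. lra.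
  - destruct (IH ltac:(lia)) as [k [Hk Hmax]].
    destruct (Rle_lt_dec (Rabs (e (S (S n)))) (Rabs (e k))) as [Hle | Hlt].
    + exists k. split; [lia |]. intros i Hi.
      destruct (Nat.eq_dec i (S (S n))) as [-> | Hne]; [lra | apply Hmax; lia].
    + exists (S (S n)). split; [lia |]. intros i Hi.
      destruct (Nat.eq_dec i (S (S n))) as [-> | Hne]; [lra |].
      pose proof (Hmax i ltac:(lia)). lra.
Qed.

Lemma tridiag_max_principle (n : nat) (e la mu : nat -> R) (r : R) :
  0 <= r -> e 1%nat = 0 -> e n = 0 ->
  (forall i, (2 <= i <= n - 1)%nat ->
     0 <= la i /\ 0 <= mu i /\ la i + mu i <= 1 /\
     Rabs (la i * e (i - 1)%nat + 2 * e i + mu i * e (S i)) <= r) ->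
  forall i, (1 <= i <= n)%nat -> Rabs (e i) <= r.
Proof.
  intros Hr He1 Hen Heq i Hi.
  destruct (exists_max_abs_index e n ltac:(lia)) as [k [Hk Hmax]].
  apply Rle_trans with (Rabs (e k)); [now apply Hmax |].
  destruct (Nat.eq_dec k 1) as [-> | Hk1]; [rewrite He1, Rabs_R0; lra |].
  destruct (Nat.eq_dec k n) as [-> | Hkn]; [rewrite Hen, Rabs_R0; lra |].
  destruct (Heq k ltac:(lia)) as [Hla [Hmu [Hsum Hres]]].
  pose proof (Hmax (k - 1)%nat ltac:(lia)) as Hprev.
  pose proof (Hmax (S k) ltac:(lia)) as Hnext.
  assert (H2 : Rabs (2 * e k)
               <= Rabs (la k * e (k - 1)%nat + 2 * e k + mu k * e (S k))
                  + la k * Rabs (e (k - 1)%nat) + mu k * Rabs (e (S k))).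
  { set (res := la k * e (k - 1)%nat + 2 * e k + mu k * e (S k)).
    replace (2 * e k) with (res + - (la k * e (k - 1)%nat) + - (mu k * e (S k)))
      by (unfold res; ring).
    eapply Rle_trans; [apply Rabs_triang |].
    eapply Rle_trans; [apply Rplus_le_compat_r, Rabs_triang |].
    rewrite !Rabs_Ropp, !Rabs_mult, (Rabs_pos_eq (la k)), (Rabs_pos_eq (mu k)) by lra. lra. }
  rewrite Rabs_mult, (Rabs_pos_eq 2) in H2 by lra.
  assert (la k * Rabs (e (k - 1)%nat) <= la k * Rabs (e k)) by (apply Rmult_le_compat_l; lra).
  assert (mu k * Rabs (e (S k)) <= mu k * Rabs (e k)) by (apply Rmult_le_compat_l; lra).
  assert ((la k + mu k) * Rabs (e k) <= Rabs (e k)).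
  { rewrite <- (Rmult_1_l (Rabs (e k))) at 2. apply Rmult_le_compat_r; [apply Rabs_pos | lra]. }
  lra.
Qed.

Lemma hstep_le_hmax (x : nat -> R) (k i : nat) : (1 <= i <= k)%nat -> hstep x i <= hmax x k.
Proof.
  induction k as [| k IH]; intros Hi; [lia |]. simpl.
  destruct (Nat.eq_dec i (S k)) as [-> | Hne]; [apply Rmax_r |].
  eapply Rle_trans; [apply IH; lia | apply Rmax_l].
Qed.

Lemma hmax_ge0 (x : nat -> R) (k : nat) : 0 <= hmax x k.
Proof.
  induction k as [| k IH]; simpl; [lra |]. eapply Rle_trans; [exact IH | apply Rmax_l].
Qed.

Lemma increasing_nodes_le (x : nat -> R) (n : nat) :
  (forall i, (1 <= i <= n - 1)%nat -> x i < x (S i)) ->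
  forall i j, (1 <= i <= j)%nat -> (j <= n)%nat -> x i <= x j.
Proof.
  intros Hinc i j Hij Hjn. induction j as [| j IH]; [lia |].
  destruct (Nat.eq_dec i (S j)) as [-> | Hne]; [lra |].
  pose proof (IH ltac:(lia) ltac:(lia)). pose proof (Hinc j ltac:(lia)). lra.
Qed.

Lemma spline_derivs_error (f : R -> R) (a b L : R) (n : nat) (x dd : nat -> R) :
  0 <= L -> C4_on f a b -> (forall t, a <= t <= b -> Rabs (Derive_n f 4 t) <= L) ->
  x 1%nat = a -> x n = b -> (forall i, (1 <= i <= n - 1)%nat -> x i < x (S i)) ->
  spline_derivs f x n dd ->
  forall i, (1 <= i <= n)%nat -> Rabs (dd i - Derive f (x i)) <= L * hhat x n ^ 3.
Proof.
  intros HL Hf Hf4 Hx1 Hxn Hinc [Hd1 [Hdn Hsp]].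
  assert (Hin : forall i, (1 <= i <= n)%nat -> a <= x i <= b).
  { intros i Hi. rewrite <- Hx1, <- Hxn. split; apply (increasing_nodes_le x n Hinc); lia. }
  apply (tridiag_max_principle n (fun i => dd i - Derive f (x i))
           (fun i => lam x (i - 1)) (fun i => mu x (i - 1))).
  - apply Rmult_le_pos; [exact HL | apply pow_le, hmax_ge0].
  - rewrite Hd1. ring.
  - rewrite Hdn. ring.
  - intros [| k] Hk; [lia |]. replace (S k - 1)%nat with k by lia.
    pose proof (Hinc k ltac:(lia)) as Hab. pose proof (Hinc (S k) ltac:(lia)) as Hbc.
    assert (Hw : 0 < hstep x k /\ 0 < hstep x (S k)) by (unfold hstep; lra).
    split; [unfold lam; apply Rlt_le, Rdiv_lt_0_compat; lra |].
    split; [unfold mu; apply Rlt_le, Rdiv_lt_0_compat; lra |].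
    split; [right; unfold lam, mu; field; lra |].
    specialize (Hsp (S k) Hk). replace (S k - 1)%nat with k in Hsp by lia.
    replace (lam x k * _ + 2 * _ + mu x k * _)
      with (3 * (lam x k * slope f x k + mu x k * slope f x (S k))
            - (lam x k * Derive f (x k) + 2 * Derive f (x (S k))
               + mu x k * Derive f (x (S (S k))))) by (rewrite <- Hsp; ring).
    apply (spline_residual_bound f a b L Hf Hf4); try apply Hin; try lia; try lra;
      unfold hhat; apply hstep_le_hmax; lia.
Qed.

Lemma is_derive_signed_square (c y : R) :
  is_derive (fun t => (t - c) * Rabs (t - c)) y (2 * Rabs (y - c)).
Proof.
  destruct (Rtotal_order y c) as [Hlt | [-> | Hgt]].
  - rewrite Rabs_left by lra.
    apply is_derive_ext_loc with (f := fun t => - (t - c) ^ 2).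
    + apply locally_interval with (a := m_infty) (b := Finite c); simpl; auto.
      intros t _ Ht. rewrite Rabs_left by lra. ring.
    + auto_derive; auto. ring.
  - apply is_derive_Reals. intros eps Heps.
    exists (mkposreal eps Heps). intros h Hh Hlt. simpl in Hlt.
    replace (c + h - c) with h by ring. replace (c - c) with 0 by ring.
    rewrite Rabs_R0.
    replace ((h * Rabs h - 0 * 0) / h - 2 * 0) with (Rabs h) by (field; auto).
    rewrite Rabs_Rabsolu; auto.
  - rewrite Rabs_pos_eq by lra.
    apply is_derive_ext_loc with (f := fun t => (t - c) ^ 2).
    + apply locally_interval with (a := Finite c) (b := p_infty); simpl; auto.
      intros t Ht _. rewrite Rabs_pos_eq by lra. ring.
    + auto_derive; auto. ring.
Qed.

Lemma is_derive_abs_cube (c y : R) :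
  is_derive (fun t => Rabs (t - c) ^ 3) y (3 * ((y - c) * Rabs (y - c))).
Proof.
  assert (Hid : is_derive (fun t => t - c) y 1) by (auto_derive; auto; ring).
  pose proof (is_derive_mult _ _ y _ _ Hid (is_derive_signed_square c y)
                (fun u v => Rmult_comm u v)) as Hprod.
  unfold mult, plus in Hprod; simpl in Hprod.
  replace (3 * ((y - c) * Rabs (y - c)))
    with (1 * ((y - c) * Rabs (y - c)) + (y - c) * (2 * Rabs (y - c))) by ring.
  assert (Hcube : forall u, u * (u * Rabs u) = Rabs u ^ 3).
  { intros u. pose proof (Rsqr_abs u) as Hsq. unfold Rsqr in Hsq.
    transitivity (u * u * Rabs u); [ring | rewrite Hsq; ring]. }
  apply is_derive_ext with (2 := Hprod). intros t. apply Hcube.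
Qed.

Lemma C2_at_of_is_derive (P g g1 g2 : R -> R) (t d : R) :
  0 < d -> (forall y, Rabs (y - t) < d -> P y = g y) ->
  (forall y, is_derive g y (g1 y)) -> (forall y, is_derive g1 y (g2 y)) ->
  continuous g2 t -> C2_at P t.
Proof.
  intros Hd HP Hg Hg1 Hc.
  assert (Hloc : forall y, Rabs (y - t) < d -> locally y (fun s => g s = P s)).
  { intros y Hy. apply Rabs_def2 in Hy.
    apply locally_interval with (a := Finite (t - d)) (b := Finite (t + d));
      simpl; try lra.
    intros s H1 H2. symmetry. apply HP. apply Rabs_def1; lra. }
  assert (E1 : forall s, Derive_n g 1 s = g1 s) by (intros s; apply is_derive_unique, Hg).
  assert (E2 : forall s, Derive_n g 2 s = g2 s).
  { intros s. change (Derive (Derive_n g 1) s = g2 s).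
    rewrite (Derive_ext _ _ _ E1). apply is_derive_unique, Hg1. }
  exists d. split; [exact Hd | split].
  - intros y Hy k Hk. apply ex_derive_n_ext_loc with (f := g); [now apply Hloc |].
    destruct k as [| [| [| k]]]; try lia.
    + exact I.
    + eexists. apply Hg.
    + change (ex_derive (Derive_n g 1) y).
      apply ex_derive_ext with (f := g1); [intros s; now rewrite E1 |].
      eexists. apply Hg1.
  - apply continuous_ext_loc with (g := g2); [| exact Hc].
    apply locally_interval with (a := Finite (t - d)) (b := Finite (t + d)); simpl; try lra.
    intros s H1 H2. rewrite <- E2. change (Derive_n g 2 s = Derive_n P 2 s).
    apply Derive_n_ext_loc, Hloc, Rabs_def1; lra.
Qed.

Lemma C2_at_cubic_plus_abs_cube (P : R -> R) (t d c0 c1 c2 c3 c k : R) :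
  0 < d ->
  (forall y, Rabs (y - t) < d -> P y = cubic c0 c1 c2 c3 c y + k * Rabs (y - c) ^ 3) ->
  C2_at P t.
Proof.
  intros Hd HP.
  apply (C2_at_of_is_derive P _
           (fun y => c1 + 2 * c2 * (y - c) + 3 * c3 * (y - c) ^ 2
                     + k * (3 * ((y - c) * Rabs (y - c))))
           (fun y => 2 * c2 + 6 * c3 * (y - c) + k * (3 * (2 * Rabs (y - c))))
           t d Hd HP).
  - intros y. apply (is_derive_plus (K := R_AbsRing) (V := R_NormedModule)).
    + unfold cubic. auto_derive; auto. ring.
    + apply is_derive_scal, is_derive_abs_cube.
  - intros y. apply (is_derive_plus (K := R_AbsRing) (V := R_NormedModule)).
    + auto_derive; auto. ring.
    + apply is_derive_scal, is_derive_scal, is_derive_signed_square.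
  - apply (continuous_plus (U := R_UniformSpace) (V := R_NormedModule)).
    + apply (ex_derive_continuous (K := R_AbsRing) (V := R_NormedModule)). auto_derive; auto.
    + apply (continuous_mult (fun _ => k)); [apply continuous_const |].
      apply (continuous_mult (fun _ => 3)); [apply continuous_const |].
      apply (continuous_mult (fun _ => 2)); [apply continuous_const |].
      apply continuous_Rabs_comp.
      apply (ex_derive_continuous (K := R_AbsRing) (V := R_NormedModule)). auto_derive; auto.
Qed.

Lemma Derive_cubic (c0 c1 c2 c3 xi X : R) :
  Derive (cubic c0 c1 c2 c3 xi) X = c1 + 2 * c2 * (X - xi) + 3 * c3 * (X - xi) ^ 2.
Proof. apply is_derive_unique. unfold cubic. auto_derive; auto. ring. Qed.

Lemma cubic_recenter (c0 c1 c2 c3 xi xj X : R) :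
  cubic c0 c1 c2 c3 xi X
  = cubic (cubic c0 c1 c2 c3 xi xj) (Derive (cubic c0 c1 c2 c3 xi) xj)
          (c2 + 3 * c3 * (xj - xi)) c3 xj X.
Proof. rewrite Derive_cubic. unfold cubic. ring. Qed.

Lemma spline_equation_defect_cubic (ql qr : R -> R) (xa xb xc A B C D G E : R) :
  xa < xb -> xb < xc ->
  (forall X, ql X = cubic A B C D xb X) -> (forall X, qr X = cubic A B G E xb X) ->
  let h := xb - xa in
  let g := xc - xb in
  g / (h + g) * Derive ql xa + 2 * Derive ql xb + h / (h + g) * Derive qr xc
  - 3 * (g / (h + g) * ((ql xb - ql xa) / h) + h / (h + g) * ((qr xc - qr xb) / g))
  = h * g / (h + g) * (C - G).
Proof.
  intros Hab Hbc Hl Hr h g.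
  rewrite !(Derive_ext _ _ _ Hl), (Derive_ext _ _ _ Hr), !Hl, !Hr, !Derive_cubic.
  unfold cubic, h, g. field. lra.
Qed.

Lemma C2_at_cubic_knot (P : R -> R) (xa xb xc A B C D E : R) :
  xa < xb -> xb < xc ->
  (forall X, xa <= X <= xb -> P X = cubic A B C D xb X) ->
  (forall X, xb <= X <= xc -> P X = cubic A B C E xb X) ->
  C2_at P xb.
Proof.
  intros Hab Hbc Hl Hr.
  (* (y - xb)^3 + |y - xb|^3 vanishes left of xb and is 2 (y - xb)^3 right of it *)
  apply (C2_at_cubic_plus_abs_cube P xb (Rmin (xb - xa) (xc - xb)) A B C ((D + E) / 2) xb
           ((E - D) / 2)).
  - apply Rmin_glb_lt; lra.
  - intros y Hy. apply Rabs_def2 in Hy.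
    pose proof (Rmin_l (xb - xa) (xc - xb)). pose proof (Rmin_r (xb - xa) (xc - xb)).
    destruct (Rle_lt_dec y xb).
    + rewrite Hl by lra. rewrite Rabs_left1 by lra. unfold cubic. field.
    + rewrite Hr by lra. rewrite Rabs_pos_eq by lra. unfold cubic. field.
Qed.

Section PiecewiseHermite.

Variables (x : nat -> R) (n : nat) (y d : nat -> R) (P : R -> R).
Hypothesis x_incr : forall i, (1 <= i <= n - 1)%nat -> x i < x (S i).
Hypothesis P_hermite : pw_hermite x n y d P.

Lemma pw_hermite_C2_at_inner (j : nat) (t : R) :
  (1 <= j <= n - 1)%nat -> x j < t < x (S j) -> C2_at P t.
Proof.
  intros Hj Ht. destruct (P_hermite j Hj) as [c0 [c1 [c2 [c3 [HP _]]]]].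
  apply (C2_at_cubic_plus_abs_cube P t (Rmin (t - x j) (x (S j) - t)) c0 c1 c2 c3 (x j) 0).
  - apply Rmin_glb_lt; lra.
  - intros X HX. apply Rabs_def2 in HX.
    pose proof (Rmin_l (t - x j) (x (S j) - t)). pose proof (Rmin_r (t - x j) (x (S j) - t)).
    rewrite HP by lra. ring.
Qed.

Lemma pw_hermite_C2_at_node (k : nat) :
  (1 <= k)%nat -> (S k <= n - 1)%nat ->
  lam x k * d k + 2 * d (S k) + mu x k * d (S (S k))
  = 3 * (lam x k * ((y (S k) - y k) / hstep x k)
         + mu x k * ((y (S (S k)) - y (S k)) / hstep x (S k))) ->
  C2_at P (x (S k)).
Proof.
  intros Hk1 Hk2 Hspline.
  pose proof (x_incr k ltac:(lia)) as Hab. pose proof (x_incr (S k) ltac:(lia)) as Hbc.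
  destruct (P_hermite k ltac:(lia)) as [c0 [c1 [c2 [c3 [HPl [Ela [Elb [Dla Dlb]]]]]]]].
  destruct (P_hermite (S k) ltac:(lia)) as [e0 [e1 [e2 [e3 [HPr [Erb [Erc [Drb Drc]]]]]]]].
  set (xa := x k) in *. set (xb := x (S k)) in *. set (xc := x (S (S k))) in *.
  set (ql := cubic c0 c1 c2 c3 xa) in *. set (qr := cubic e0 e1 e2 e3 xb) in *.
  set (A := y (S k)). set (B := d (S k)). set (C := c2 + 3 * c3 * (xb - xa)).
  assert (Eql : forall X, ql X = cubic A B C c3 xb X).
  { intros X. unfold A, B. rewrite <- Elb, <- Dlb. apply cubic_recenter. }
  assert (Eqr : forall X, qr X = cubic A B e2 e3 xb X).
  { assert (He0 : e0 = A) by (unfold A; rewrite <- Erb; unfold qr, cubic; ring).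
    assert (He1 : e1 = B).
    { unfold B. rewrite <- Drb. unfold qr. rewrite Derive_cubic. ring. }
    intros X. now rewrite <- He0, <- He1. }
  assert (Hcurv : C = e2).
  { pose proof (spline_equation_defect_cubic ql qr xa xb xc A B C c3 e2 e3 Hab Hbc Eql Eqr)
      as Hdef.
    simpl in Hdef. rewrite Dla, Dlb, Drc, Ela, Elb, Erb, Erc in Hdef.
    unfold lam, mu, hstep in Hspline. fold xa xb xc in Hspline.
    rewrite Hspline, Rminus_diag in Hdef.
    assert (Hpos : 0 < (xb - xa) * (xc - xb) / (xb - xa + (xc - xb)))
      by (apply Rdiv_lt_0_compat; nra).
    symmetry in Hdef. apply Rmult_integral in Hdef as [Hz | Hz]; lra. }
  apply (C2_at_cubic_knot P xa xb xc A B C c3 e3 Hab Hbc).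
  - intros X HX. rewrite HPl by exact HX. apply Eql.
  - intros X HX. rewrite HPr by exact HX. rewrite Eqr, Hcurv. reflexivity.
Qed.

Lemma partition_locate (t : R) :
  (1 <= n)%nat -> x 1%nat <= t < x n ->
  exists j, (1 <= j <= n - 1)%nat /\ x j <= t < x (S j).
Proof.
  intros Hn Ht.
  assert (Hm : forall m, (1 <= m <= n)%nat -> t < x m ->
                 exists j, (1 <= j < m)%nat /\ x j <= t < x (S j)).
  { induction m as [| [| m] IH]; intros Hm Htm; [lia | lra |].
    destruct (Rlt_le_dec t (x (S m))) as [Hlt | Hle].
    - destruct (IH ltac:(lia) Hlt) as [j [Hj Hjt]]. exists j. split; [lia | exact Hjt].
    - exists (S m). split; [lia | lra]. }
  destruct (Hm n ltac:(lia) (proj2 Ht)) as [j [Hj Hjt]].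
  exists j. split; [lia | exact Hjt].
Qed.

Lemma pw_hermite_C2_at (t : R) :
  (1 <= n)%nat -> x 1%nat < t < x n ->
  (forall j, (2 <= j <= n - 1)%nat -> t = x j ->
     lam x (j - 1) * d (j - 1)%nat + 2 * d j + mu x (j - 1) * d (S j)
     = 3 * (lam x (j - 1) * ((y j - y (j - 1)%nat) / hstep x (j - 1))
            + mu x (j - 1) * ((y (S j) - y j) / hstep x j))) ->
  C2_at P t.
Proof.
  intros Hn Ht Hnodes.
  destruct (partition_locate t Hn ltac:(lra)) as [j [Hj [[Hlt | Heq] Htj]]].
  - exact (pw_hermite_C2_at_inner j t Hj (conj Hlt Htj)).
  - subst t. destruct j as [| [| k]]; [lia | lra |].
    apply pw_hermite_C2_at_node; [lia | lia |].
    specialize (Hnodes (S (S k)) ltac:(lia) eq_refl).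
    replace (S (S k) - 1)%nat with (S k) in Hnodes by lia. exact Hnodes.
Qed.

End PiecewiseHermite.

Theorem proposition1 :
  forall (a b : R) (f : R -> R) (L K T p : R),
    a < b -> 0 < L -> 0 < K -> 0 < T -> 0 < p ->
    C4_on f a b ->
    (forall t, a <= t <= b -> Rabs (Derive_n f 4 t) <= L) ->
    exists C : R, 0 <= C /\
    forall (n : nat) (x : nat -> R),
      (2 <= n)%nat ->
      x 1%nat = a -> x n = b ->
      (forall i, (1 <= i <= n - 1)%nat -> x i < x (S i)) ->
      (forall i, (1 <= i <= n - 1)%nat -> hhat x n / hstep x i <= K) ->
      forall (dd : nat -> R), spline_derivs f x n dd ->
      forall (i0 : nat) (ft : R), (1 < i0 < n)%nat ->
        Rabs (Derive f (x i0) - ft) = T * Rpower (hhat x n) p ->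
        let F := fun i : nat => if Nat.eqb i i0 then ft else dd i in
        Rabs (F i0 - Derive f (x i0)) <= C * Rpower (hhat x n) p /\
        (forall i, (1 <= i <= n)%nat -> i <> i0 ->
           Rabs (F i - Derive f (x i)) <= C * hhat x n ^ 3) /\
        (forall P : R -> R, pw_hermite x n (fun i => f (x i)) F P ->
           forall t, x 1%nat < t < x n ->
             t <> x (i0 - 1)%nat -> t <> x i0 -> t <> x (S i0) ->
             C2_at P t).
Proof.
  intros a b f L K T p Hab HL HK HT Hp Hf Hf4.
  exists (Rmax T L). split; [pose proof (Rmax_l T L); lra |].
  intros n x Hn Hx1 Hxn Hinc _ dd Hdd i0 ft Hi0 Hft F.
  assert (FE : forall i, i <> i0 -> F i = dd i).
  { intros i Hi. unfold F. now rewrite (proj2 (Nat.eqb_neq i i0) Hi). }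
  split; [| split].
  - unfold F. rewrite Nat.eqb_refl, Rabs_minus_sym, Hft.
    apply Rmult_le_compat_r; [left; apply exp_pos | apply Rmax_l].
  - intros i Hi Hne. rewrite FE by exact Hne.
    eapply Rle_trans; [apply (spline_derivs_error f a b L n x dd); auto; lra |].
    apply Rmult_le_compat_r; [apply pow_le, hmax_ge0 | apply Rmax_r].
  - intros P HP t Ht Ht_prev Ht_i0 Ht_next.
    apply (pw_hermite_C2_at x n _ F P Hinc HP t ltac:(lia) Ht).
    intros j Hj ->.
    assert (j <> i0) by (intros ->; auto).
    assert (S j <> i0) by (intros <-; apply Ht_prev; f_equal; lia).
    assert ((j - 1)%nat <> i0) by (intros <-; apply Ht_next; f_equal; lia).
    pose proof (proj2 (proj2 Hdd) j Hj) as Hsp. rewrite !FE by assumption.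
    destruct j as [| k]; [lia |]. replace (S k - 1)%nat with k in * by lia. exact Hsp.
Qed.
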